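(* Let $S=\{f_1,\dots,f_n\}$ be a finite set of polynomials in $\mathbb{Q}[\alpha_1,\dots,\alpha_r]$ and let $\sigma$ be a permutation of $\{\alpha_1,\dots,\alpha_r\}$. If $S$ is compatibility graph reducible with respect to $\sigma$, then every subset $L\subseteq S$ is compatibility graph reducible with respect to $\sigma$.
   Context: A polynomial is called linear in a variable $x$ if its degree in $x$ is at most one (it may be constant in $x$). One reduction step. Let $T=\{f_1,\dots,f_m\}$ be a finite set of polynomials with rational coefficients, together with a graph $C$ on vertex set $T$ (its compatibility graph), and let $x$ be a variable. If some $f_i$ is not linear in $x$, the step is undefined. Otherwise write $f_i=g_ix+h_i$ with $g_i=\partial f_i/\partial x$ and $h_i=f_i|_{x=0}$. Let $S^1=\{g_i\}$, $S^2=\{h_i\}$, $S^3=\{g_ih_j-h_ig_j : i\neq j,\ f_if_j\in E(C)\}$, and let $T_{(x)}$ be the set of irreducible factors over $\mathbb{Q}$ of the polynomials in $S^1\cup S^2\cup S^3$. Each $q\in T_{(x)}$ receives a set of labels (2-element sets): the label $\{0,i\}$ if $q$ is an irreducible factor of $g_i$; the label $\{i,\infty\}$ if $q$ is an irreducible factor of $h_i$, and additionally the label $\{0,i\}$ if moreover $h_i=f_i$; the label $\{i,j\}$ if $q$ is an irreducible factor of $g_ih_j-h_ig_j\in S^3$. The new compatibility graph $C_{(x)}$ on vertex set $T_{(x)}$ has $qq'$ as an edge iff some label of $q$ and some label of $q'$ have nonempty intersection. Full reduction. Let $S\subseteq\mathbb{Q}[\alpha_1,\dots,\alpha_r]$ be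 finite and $\sigma$ a permutation of the variables; write $\sigma(i)$ for the $i$-th variable in the order. Let $(S_{[\sigma(1)]},C_{[\sigma(1)]})$ be the result of one reduction step with variable $\sigma(1)$ applied to $S$ with the complete graph as compatibility graph. For $k\ge 2$ define inductively $S_{[\sigma(1),\dots,\sigma(k)]}=\bigcap_{1\le i\le k} S_{[\sigma(1),\dots,\widehat{\sigma(i)},\dots,\sigma(k)](\sigma(i))}$, where the subscript $(\sigma(i))$ means one reduction step with variable $\sigma(i)$ applied to the set $S_{[\sigma(1),\dots,\widehat{\sigma(i)},\dots,\sigma(k)]}$ with its compatibility graph; in these intersections polynomials differing by a nonzero constant factor are identified. The compatibility graph $C_{[\sigma(1),\dots,\sigma(k)]}$ has $fg$ as an edge iff $fg$ is an edge of every $C_{[\sigma(1),\dots,\widehat{\sigma(i)},\dots,\sigma(k)](\sigma(i))}$. $S$ is compatibility graph reducible with respect to $\sigma$ if for all $1\le i\le r-1$ the set $S_{[\sigma(1),\dots,\sigma(i)]}$ is defined and all its polynomials are linear in $\sigma(i+1)$. *)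

From HB Require Import structures.
From mathcomp Require Import all_boot all_order all_algebra.
From mathcomp Require Import mpoly.
From mathcomp Require Import fingroup perm.
Set Implicit Arguments. Unset Strict Implicit. Unset Printing Implicit Defensive.
Import GRing.Theory.
Local Open Scope ring_scope.

Notation qpoly r := {mpoly rat[r]}.

Section Reduction.
Variable r : nat.
Implicit Types (f g h p q : qpoly r) (x : 'I_r).

Definition mdvd q p : Prop := exists c, p = q * c.

Definition mirreducible q : Prop :=
  q != 0 /\ q \isn't a GRing.unit /\
  forall a b : qpoly r, q = a * b -> a \is a GRing.unit \/ b \is a GRing.unit.

(* q is an irreducible factor of p (p nonzero: 0 has no factorization) *)
Definition irr_factor q p : Prop := p != 0 /\ mirreducible q /\ mdvd q p.

Definition linear_in x f : Prop := forall m, m \in msupp f -> (m x <= 1)%N.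

(* g = df/dx and h = f|_{x=0} *)
Definition gpart x f : qpoly r := mderiv x f.
Definition hpart x f : qpoly r :=
  f \mPo [tuple (if i == x then 0 else 'X_i) | i < r].

(* Sets are predicates; after one reduction step they are closed under
   multiplication by nonzero constants, so intersections of such sets
   identify polynomials differing by a nonzero constant factor. *)
Record layer := Layer { lset : qpoly r -> Prop; lgraph : qpoly r -> qpoly r -> Prop }.

(* label elements: 0, infinity, or an index (the polynomial f_i itself) *)
Inductive lab := LZero | LInf | LIdx of qpoly r.

Definition has_label (T : layer) x q (a b : lab) : Prop :=
  (exists f, [/\ lset T f, a = LZero, b = LIdx f &
                 (irr_factor q (gpart x f) \/
                  (irr_factor q (hpart x f) /\ hpart x f = f))]) \/
  (exists f, [/\ lset T f, a = LIdx f, b = LInf & irr_factor q (hpart x f)]) \/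
  (exists f f', [/\ lset T f /\ lset T f', f != f', lgraph T f f',
       a = LIdx f /\ b = LIdx f' &
       irr_factor q (gpart x f * hpart x f' - hpart x f * gpart x f')]).

(* one reduction step (its definedness is [step_ok]) *)
Definition step x (T : layer) : layer :=
  Layer
    (fun q => (exists f, lset T f /\ (irr_factor q (gpart x f) \/ irr_factor q (hpart x f))) \/
       exists f f', [/\ lset T f, lset T f', f != f', lgraph T f f' &
                    irr_factor q (gpart x f * hpart x f' - hpart x f * gpart x f')])
    (fun q q' => exists a b c d, [/\ has_label T x q a b, has_label T x q' c d &
                   (a = c \/ a = d \/ b = c \/ b = d)]).

Definition step_ok x (T : layer) : Prop := forall f, lset T f -> linear_in x f.

Definition rem_at (i : nat) (s : seq 'I_r) := take i s ++ drop i.+1 s.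

Definition base (S : seq (qpoly r)) : layer := Layer (fun p => p \in S) (fun _ _ => True).

(* S_[vs] for a sequence vs of variables, by the inductive intersection
   formula (for vs = [:: x] it is one step from the base). *)
Fixpoint red_aux (S : seq (qpoly r)) (n : nat) (vs : seq 'I_r) : layer :=
  match n with
  | 0 => base S
  | n'.+1 =>
    Layer (fun p => forall i : 'I_(size vs),
             lset (step (tnth (in_tuple vs) i) (red_aux S n' (rem_at i vs))) p)
          (fun p q => forall i : 'I_(size vs),
             lgraph (step (tnth (in_tuple vs) i) (red_aux S n' (rem_at i vs))) p q)
  end.

Definition red S vs := red_aux S (size vs) vs.

Fixpoint red_def_aux (S : seq (qpoly r)) (n : nat) (vs : seq 'I_r) : Prop :=
  match n with
  | 0 => True
  | n'.+1 => forall i : 'I_(size vs),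
      red_def_aux S n' (rem_at i vs) /\ step_ok (tnth (in_tuple vs) i) (red_aux S n' (rem_at i vs))
  end.

Definition red_def S vs := red_def_aux S (size vs) vs.

Definition sprefix (sigma : 'S_r) (k : nat) : seq 'I_r :=
  [seq sigma j | j <- take k (enum 'I_r)].

Definition cg_reducible (S : seq (qpoly r)) (sigma : 'S_r) : Prop :=
  forall (i : nat) (Hi : (i < r)%N), (1 <= i)%N ->
    red_def S (sprefix sigma i) /\
    forall f, lset (red S (sprefix sigma i)) f -> linear_in (sigma (Ordinal Hi)) f.
End Reduction.

From HB Require Import structures.
From mathcomp Require Import all_boot all_order all_algebra.
From mathcomp Require Import mpoly.
From mathcomp Require Import fingroup perm.

(* A reduction step is monotone in its input: a smaller set with a smaller
   compatibility graph yields fewer polynomials, fewer labels and hence fewer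
   edges.  By induction every S_[vs] computed from L is contained in the one
   computed from S, and definedness and linearity, being conditions on all
   members, pass from the larger layers to the smaller ones. *)

Set Implicit Arguments.

Section Monotonicity.
Variable r : nat.
Implicit Types (T U : layer r) (x : 'I_r) (L S : seq {mpoly rat[r]}).

Record sublayer T U : Prop := Sublayer {
  sub_lset : forall p, lset T p -> lset U p;
  sub_lgraph : forall p q, lgraph T p q -> lgraph U p q }.

Lemma has_label_sub T U x q a b :
  sublayer T U -> has_label T x q a b -> has_label U x q a b.
Proof.
case=> subS subG [[f [Tf -> -> Hq]] | [[f [Tf -> -> Hq]] | [f [f' [[Tf Tf'] ff' Gff' ab Hq]]]]].
- by left; exists f; split; auto.
- by right; left; exists f; split; auto.
- by right; right; exists f, f'; split; auto.
Qed.

Lemma step_sub T U x : sublayer T U -> sublayer (step x T) (step x U).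
Proof.
move=> TU; have [subS subG] := TU; split.
- move=> p /= [[f [Tf Hp]] | [f [f' [Tf Tf' ff' Gff' Hp]]]].
  + by left; exists f; auto.
  + by right; exists f, f'; split; auto.
- move=> p q /= [a [b [c [d [lab_p lab_q meet]]]]].
  by exists a, b, c, d; split=> //; apply: has_label_sub TU _.
Qed.

Lemma step_ok_sub T U x : sublayer T U -> step_ok x U -> step_ok x T.
Proof. by move=> [subS _] okU f /subS; apply: okU. Qed.

Lemma red_aux_sub L S n vs :
  {subset L <= S} -> sublayer (red_aux L n vs) (red_aux S n vs).
Proof.
move=> LS; elim: n vs => [|n IHn] vs; first by split=> // p /LS.
have step_i i := step_sub (tnth (in_tuple vs) i) (IHn (rem_at i vs)).
split=> [p | p q] /= Hp i; first exact: sub_lset (step_i i) _ (Hp i).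
exact: sub_lgraph (step_i i) _ _ (Hp i).
Qed.

Lemma red_def_aux_sub L S n vs :
  {subset L <= S} -> red_def_aux S n vs -> red_def_aux L n vs.
Proof.
move=> LS; elim: n vs => [|n IHn] vs //= defS i.
have [defS_i okS_i] := defS i; split; first exact: IHn.
exact: step_ok_sub (red_aux_sub _ _ LS) okS_i.
Qed.

End Monotonicity.

Theorem lemma3p2 (r : nat) (S : seq {mpoly rat[r]}) (sigma : 'S_r) :
  cg_reducible S sigma ->
  forall L : seq {mpoly rat[r]}, {subset L <= S} -> cg_reducible L sigma.
Proof.
move=> redS L LS i lt_ir le1i; have [defS linS] := redS i lt_ir le1i.
split; first exact: red_def_aux_sub LS defS.
by move=> f /(sub_lset (red_aux_sub _ _ LS)); apply: linS.
Qed.
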